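(* Let $p\geq 3$ be a prime, $u\in\{1,\ldots,p-1\}$ and $s$ a positive integer. Then for every integer $n>up^{s}$ we have $$\nu_{p}\big(A_{p,(p-1)(up^s-1)}(n)\big)\geq 1.$$
   Context: For an integer $m\geq 2$ and a positive integer $k$, the integers $A_{m,k}(n)$, $n\in\mathbb{N}=\{0,1,2,\ldots\}$, are defined by the formal power series identity $\prod_{i=0}^{\infty}\big(1-x^{m^{i}}\big)^{-k}=\sum_{n=0}^{\infty}A_{m,k}(n)x^{n}$. Equivalently, $A_{m,k}(n)$ is the number of representations of $n$ as a sum of powers of $m$ where each summand carries one of $k$ colors. For a prime $p$, $\nu_p(n)$ denotes the $p$-adic valuation of the integer $n$, with $\nu_p(0)=+\infty$. *)

From mathcomp Require Import all_boot.
Set Implicit Arguments. Unset Strict Implicit. Unset Printing Implicit Defensive.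

(* Coefficients of the finite product prod_{i < L} (1 - x^(m^i))^(-k).
   Using (1 - x^d)^(-k) = sum_j 'C(j + k - 1, k - 1) x^(d j):
   partial_coef m k 0 n = [n == 0], and multiplying by the factor with
   i = L convolves with these coefficients. *)
Fixpoint partial_coef (m k L n : nat) : nat :=
  match L with
  | 0 => (n == 0)
  | L'.+1 =>
      \sum_(0 <= j < (n %/ m ^ L').+1)
        'C(j + k - 1, k - 1) * partial_coef m k L' (n - j * m ^ L')
  end.

(* A_{m,k}(n): coefficient of x^n in prod_{i >= 0} (1 - x^(m^i))^(-k).
   For m >= 2 the factors with m^i > n (in particular all i >= n+1)
   do not affect the coefficient of x^n, so the infinite product
   is truncated at L = n + 1. *)
Definition A (m k n : nat) : nat := partial_coef m k n.+1 n.

(* Modulo p and modulo x^N, the factor (1 - x^(p^i))^(-k) equals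
   (1 - x)^(-k p^i) by the Frobenius identity (1 - x)^(p^i) = 1 - x^(p^i).
   For k = (p - 1) M the product over i < N therefore has exponent
   -(p - 1) M (1 + p + ... + p^(N-1)) = M - p^N M, i.e. it is
   (1 - x)^M / (1 - x^(p^N))^M, which is congruent to the polynomial
   (1 - x)^M modulo x^N.  Hence A_{p,(p-1)M}(n) is congruent modulo p to
   the coefficient of x^n in (1 - x)^M, which vanishes for n > M. *)

From mathcomp Require Import all_boot all_algebra.
From mathcomp Require Import zify.

Set Implicit Arguments.
Unset Strict Implicit.
Unset Printing Implicit Defensive.

Import GRing.Theory.
Local Open Scope ring_scope.

Section CongruenceModXn.

Variables (R : comNzRingType) (N : nat).

Definition eqmodXn (P Q : {poly R}) := forall i, (i < N)%N -> P`_i = Q`_i.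

Lemma eqmodXn_refl P : eqmodXn P P.
Proof. by []. Qed.

Lemma eqmodXn_sym P Q : eqmodXn P Q -> eqmodXn Q P.
Proof. by move=> PQ i ltiN; rewrite PQ. Qed.

Lemma eqmodXn_trans P Q S : eqmodXn P Q -> eqmodXn Q S -> eqmodXn P S.
Proof. by move=> PQ QS i ltiN; rewrite PQ // QS. Qed.

Lemma eqmodXnM P P' Q Q' :
  eqmodXn P P' -> eqmodXn Q Q' -> eqmodXn (P * Q) (P' * Q').
Proof.
move=> PP' QQ' i ltiN; rewrite !coefM; apply: eq_bigr => j _.
by rewrite PP' ?QQ' //; have := ltn_ord j; lia.
Qed.

Lemma eqmodXnX P Q M : eqmodXn P Q -> eqmodXn (P ^+ M) (Q ^+ M).
Proof.
move=> PQ; elim: M => [|M IH]; first by rewrite !expr0.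
by rewrite !exprS; apply: eqmodXnM.
Qed.

Lemma eqmodXn_prod1 I (r : seq I) (F : I -> {poly R}) :
  (forall i, eqmodXn (F i) 1) -> eqmodXn (\prod_(i <- r) F i) 1.
Proof.
move=> F1; apply: (big_ind (eqmodXn^~ 1)) => // P Q P1 Q1.
by rewrite -(mulr1 1); apply: eqmodXnM.
Qed.

Lemma eqmodXn_comp P Q d :
  (0 < d)%N -> eqmodXn P Q -> eqmodXn (P \Po 'X^d) (Q \Po 'X^d).
Proof.
move=> d_gt0 PQ i ltiN; rewrite !coef_comp_poly_Xn // PQ //.
exact: leq_ltn_trans (leq_div _ _) ltiN.
Qed.

Lemma eqmodXn_subXn_exp d M : (N <= d)%N -> eqmodXn ((1 - 'X^d) ^+ M) 1.
Proof.
move=> leNd; rewrite -[X in eqmodXn _ X](expr1n _ M); apply: eqmodXnX => i ltiN.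
by rewrite coefB coefXn ltn_eqF ?subr0 // (leq_trans ltiN leNd).
Qed.

End CongruenceModXn.

Section NegativeBinomialSeries.

Variables (R : comNzRingType) (N : nat).

(* Truncation at x^N of (1 - x)^(-k) = sum_j 'C(j + k - 1, k - 1) x^j. *)
Definition negbinom_poly k : {poly R} := \poly_(j < N) 'C(j + k - 1, k - 1)%:R.

Lemma negbinom_polyS k : (0 < k)%N ->
  eqmodXn N (negbinom_poly k.+1 * (1 - 'X)) (negbinom_poly k).
Proof.
case: k => // k _ [|i] ltiN; rewrite mulrBr mulr1 coefB coefMX !coef_poly ltiN.
  by rewrite subr0 !add0n !subSS !subn0 !binn.
rewrite ltnW //= !addSn !addnS !subSS !subn0.
by rewrite binS natrD addrAC subrr add0r.
Qed.

Lemma negbinom_polyM k : (0 < k)%N ->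
  eqmodXn N (negbinom_poly k * (1 - 'X) ^+ k) 1.
Proof.
elim: k => // [[_ _ | k IH _]].
  move=> [|i] ltiN; rewrite expr1 mulrBr mulr1 coefB coefMX !coef_poly ltiN coef1.
    by rewrite subr0 bin0.
  by rewrite ltnW //= !bin0 subrr.
apply: eqmodXn_trans (IH isT); rewrite exprS mulrA.
by apply: eqmodXnM (negbinom_polyS _) _.
Qed.

Lemma negbinom_comp_polyM k d : (0 < k)%N -> (0 < d)%N ->
  eqmodXn N ((negbinom_poly k \Po 'X^d) * (1 - 'X^d) ^+ k) 1.
Proof.
move=> k_gt0 d_gt0.
have -> : (1 - 'X^d : {poly R}) ^+ k = (1 - 'X) ^+ k \Po 'X^d.
  by rewrite rmorphXn /= comp_polyB comp_polyC comp_polyX.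
rewrite -comp_polyM -[X in eqmodXn _ _ X](comp_polyC 1 'X^d) polyC1.
exact: eqmodXn_comp (negbinom_polyM k_gt0).
Qed.

Lemma coef_mul_negbinom_comp (P : {poly R}) k d c : (0 < d)%N -> (c < N)%N ->
  (P * (negbinom_poly k \Po 'X^d))`_c =
  \sum_(0 <= j < (c %/ d).+1) 'C(j + k - 1, k - 1)%:R * P`_(c - j * d).
Proof.
move=> d_gt0 ltcN.
rewrite /negbinom_poly poly_def.
rewrite (big_morph (comp_poly 'X^d) (fun P Q => comp_polyD P Q 'X^d) (comp_poly0 _)).
rewrite mulr_sumr coef_sum.
set F := fun j => 'C(j + k - 1, k - 1)%:R * if (c < j * d)%N then 0 else P`_(c - j * d).
rewrite (eq_bigr (F \o val)) => [|j _]; last first.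
  by rewrite comp_polyZ comp_Xn_poly -exprM mulnC -scalerAr coefZ coefMXn.
rewrite -(big_mkord xpredT F).
have ledN : ((c %/ d).+1 <= N)%N by apply: leq_ltn_trans (leq_div _ _) ltcN.
rewrite (big_cat_nat (leq0n _) ledN) /= [X in _ + X]big1_seq ?addr0; last first.
  move=> j /andP[_]; rewrite mem_index_iota => /andP[ltcdj _].
  by rewrite /F ifT ?mulr0 // -ltn_divLR.
apply: eq_big_nat => j /andP[_ ltjc].
by rewrite /F ifF // ltnNge -leq_divRL // -ltnS ltjc.
Qed.

Definition partial_series m k L : {poly R} :=
  \prod_(i < L) (negbinom_poly k \Po 'X^(m ^ i)).

Lemma coef_partial_series m k L c : (0 < m)%N -> (c < N)%N ->
  (partial_series m k L)`_c = (partial_coef m k L c)%:R.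
Proof.
move=> m_gt0; elim: L c => [|L IH] c ltcN.
  by rewrite /partial_series big_ord0 coef1.
rewrite /partial_series big_ord_recr /= coef_mul_negbinom_comp ?expn_gt0 ?m_gt0 //.
rewrite natr_sum; apply: eq_bigr => j _; rewrite natrM IH //.
exact: leq_ltn_trans (leq_subr _ _) ltcN.
Qed.

Lemma partial_seriesM m k L : (0 < m)%N -> (0 < k)%N ->
  eqmodXn N (partial_series m k L * \prod_(i < L) (1 - 'X^(m ^ i)) ^+ k) 1.
Proof.
move=> m_gt0 k_gt0; rewrite /partial_series -big_split /=.
by apply: eqmodXn_prod1 => i; apply: negbinom_comp_polyM; rewrite ?expn_gt0 ?m_gt0.
Qed.

End NegativeBinomialSeries.

Section PositiveCharacteristic.

Variables (R : comNzRingType) (p : nat).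
Hypothesis pcharRp : p \in [pchar R].

Lemma subX_exp_pchar i : (1 - 'X : {poly R}) ^+ (p ^ i) = 1 - 'X^(p ^ i).
Proof.
have pcharRXp : p \in [pchar {poly R}] by rewrite pchar_poly.
elim: i => [|i IH]; first by rewrite !expn0 !expr1.
rewrite expnSr exprM IH -(pFrobenius_autE pcharRXp).
rewrite pFrobenius_autB_comm ?pFrobenius_aut1 ?pFrobenius_autE -?exprM //.
exact: mulrC.
Qed.

Lemma prod_subXpexp_pchar M L :
  \prod_(i < L) (1 - 'X^(p ^ i)) ^+ ((p - 1) * M) * (1 - 'X) ^+ M
    = (1 - 'X^(p ^ L) : {poly R}) ^+ M.
Proof.
have p_gt0 : (0 < p)%N by rewrite prime_gt0 // (pcharf_prime pcharRp).
under eq_bigr => i _ do rewrite -subX_exp_pchar -exprM.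
rewrite prodrXr -exprD -subX_exp_pchar -exprM; congr (_ ^+ _).
rewrite -big_distrl /=; have := predn_exp p L; have := expn_gt0 p L.
by rewrite p_gt0; set S := \sum_(i < L) _; nia.
Qed.

Lemma partial_series_pchar N M L : (0 < M)%N -> (N <= p ^ L)%N ->
  eqmodXn N (partial_series R N p ((p - 1) * M) L) ((1 - 'X) ^+ M).
Proof.
move=> M_gt0 leNpL; have p_gt1 := prime_gt1 (pcharf_prime pcharRp).
have k_gt0 : (0 < (p - 1) * M)%N by rewrite muln_gt0 subn_gt0 p_gt1.
set P := partial_series _ _ _ _ _.
have PE : eqmodXn N (P * \prod_(i < L) (1 - 'X^(p ^ i)) ^+ ((p - 1) * M)) 1.
  exact: partial_seriesM (ltnW p_gt1) k_gt0.
have E1 : eqmodXn N (1 : {poly R})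
  (\prod_(i < L) (1 - 'X^(p ^ i)) ^+ ((p - 1) * M) * (1 - 'X) ^+ M).
  by rewrite prod_subXpexp_pchar; apply/eqmodXn_sym/eqmodXn_subXn_exp.
rewrite -[P]mulr1; apply: (eqmodXn_trans (eqmodXnM (eqmodXn_refl P) E1)).
rewrite mulrA -[X in eqmodXn _ _ X]mul1r; exact: eqmodXnM PE (eqmodXn_refl _).
Qed.

Lemma A_pchar M n : (0 < M)%N ->
  (A p ((p - 1) * M) n)%:R = ((1 - 'X : {poly R}) ^+ M)`_n.
Proof.
move=> M_gt0; have p_gt1 := prime_gt1 (pcharf_prime pcharRp).
rewrite /A -(coef_partial_series _ _ _ (ltnW p_gt1) (ltnSn n)).
exact: partial_series_pchar M_gt0 (ltnW (ltn_expl _ p_gt1)) _ (ltnSn n).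
Qed.

End PositiveCharacteristic.

Lemma dvdn_A p M n : prime p -> (0 < M)%N -> (M < n)%N ->
  (p %| A p ((p - 1) * M) n)%N.
Proof.
move=> p_pr M_gt0 ltMn; have pcharFp := pchar_Fp p_pr.
rewrite (dvdn_pcharf pcharFp) (A_pchar pcharFp) //.
rewrite nth_default //; apply: leq_trans (size_poly_exp_leq _ _) _.
by rewrite -opprB size_polyN -polyC1 size_XsubC mul1n.
Qed.

Local Close Scope ring_scope.

Theorem theorem3p1 (p u s n : nat) :
  prime p -> 3 <= p -> 1 <= u <= p - 1 -> 0 < s ->
  u * p ^ s < n ->
  p %| A p ((p - 1) * (u * p ^ s - 1)) n.
Proof.
move=> p_pr _ /andP[u_gt0 _] s_gt0 lt_n.
have p_gt1 := prime_gt1 p_pr.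
have p_le_ps : p <= p ^ s by rewrite -{1}(expn1 p) leq_pexp2l // ltnW.
apply: dvdn_A => //; nia.
Qed.
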